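(* Let $G=(V,E)$ be a connected simple graph with a set-valued metric $\Omega(-,-)$ taking values in subsets of a finite set $\Omega$, and suppose there is an equivariant involution $x\mapsto -x$ on $V$. Then the diameter of $G$ is at least $|\Omega|$.
   Context: For a connected simple graph $G=(V,E)$ and a set $\Omega$, a set-valued metric on $G$ is a function $\Omega(-,-):V\times V\to 2^{\Omega}$ such that $\Omega(x,y)=\Omega(y,x)$ for all $x,y$; $|\Omega(x,y)|=1$ whenever $\{x,y\}\in E$; and $\Omega(x,z)=\Omega(x,y)\triangle\Omega(y,z)$ for all $x,y,z$, where $\triangle$ is symmetric difference. An involution $x\mapsto -x$ on $V$ is equivariant if $\Omega(x,-y)=\Omega\setminus\Omega(x,y)$ for all $x,y\in V$. *)

From mathcomp Require Import all_boot.
Set Implicit Arguments. Unset Strict Implicit. Unset Printing Implicit Defensive.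

Definition simple_graph (V : Type) (adj : V -> V -> Prop) : Prop :=
  (forall x y, adj x y -> adj y x) /\ (forall x, ~ adj x x).

Inductive walk (V : Type) (adj : V -> V -> Prop) : V -> V -> nat -> Prop :=
  | walk_nil x : walk adj x x 0
  | walk_cons x y z n : adj x y -> walk adj y z n -> walk adj x z n.+1.

Definition connected_graph (V : Type) (adj : V -> V -> Prop) : Prop :=
  inhabited V /\ forall x y, exists n, walk adj x y n.

Definition dist_ge (V : Type) (adj : V -> V -> Prop) (x y : V) (k : nat) : Prop :=
  forall n, walk adj x y n -> k <= n.

Definition diameter_ge (V : Type) (adj : V -> V -> Prop) (k : nat) : Prop :=
  exists x y, dist_ge adj x y k.

Definition symdiff (T : finType) (A B : {set T}) : {set T} :=
  (A :\: B) :|: (B :\: A).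

Definition set_valued_metric (V : Type) (adj : V -> V -> Prop) (Om : finType)
    (d : V -> V -> {set Om}) : Prop :=
  [/\ forall x y, d x y = d y x,
      forall x y, adj x y -> #|d x y| = 1
    & forall x y z, d x z = symdiff (d x y) (d y z)].

Definition equivariant_involution (V : Type) (Om : finType)
    (d : V -> V -> {set Om}) (neg : V -> V) : Prop :=
  (forall x, neg (neg x) = x) /\ (forall x y, d x (neg y) = ~: d x y).

From mathcomp Require Import all_boot.
Set Implicit Arguments. Unset Strict Implicit. Unset Printing Implicit Defensive.

(* The metric distance of a walk's endpoints is bounded by its length, since
   each edge changes d by one element. An equivariant involution puts x and -x
   at metric distance Om, so every walk from x to -x has length >= #|Om|. *)

Lemma card_symdiff_le (T : finType) (A B : {set T}) :
  #|symdiff A B| <= #|A| + #|B|.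
Proof.
apply: leq_trans (leq_card_setU A B); apply: subset_leq_card.
by apply/subsetP => z; rewrite /symdiff !inE; case: (z \in A); case: (z \in B).
Qed.

Lemma symdiffss (T : finType) (A : {set T}) : symdiff A A = set0.
Proof. by rewrite /symdiff setDv setU0. Qed.

Section SetValuedMetric.

Variables (V : Type) (adj : V -> V -> Prop) (Om : finType).
Variable d : V -> V -> {set Om}.
Hypothesis d_metric : set_valued_metric adj d.

Lemma metric_diag x : d x x = set0.
Proof. by case: d_metric => _ _ d_tri; rewrite (d_tri x x x) symdiffss. Qed.

Lemma card_metric_le_walk x y n : walk adj x y n -> #|d x y| <= n.
Proof.
case: d_metric => _ d_edge d_tri.
elim=> {x y n} [x | x y z n xy _ IH]; first by rewrite metric_diag cards0.
rewrite (d_tri x y z); apply: (leq_trans (card_symdiff_le _ _)).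
by rewrite d_edge // add1n ltnS.
Qed.

Lemma metric_neg_self (neg : V -> V) x :
  equivariant_involution d neg -> d x (neg x) = setT.
Proof. by case=> _ d_neg; rewrite d_neg metric_diag setC0. Qed.

End SetValuedMetric.

Theorem proposition3p8 (V : Type) (adj : V -> V -> Prop) (Om : finType)
    (d : V -> V -> {set Om}) (neg : V -> V) :
  simple_graph adj -> connected_graph adj ->
  set_valued_metric adj d -> equivariant_involution d neg ->
  diameter_ge adj #|Om|.
Proof.
move=> _ [[x] _] d_metric d_neg; exists x, (neg x) => n w.
by rewrite -cardsT -(metric_neg_self d_metric x d_neg) (card_metric_le_walk d_metric w).
Qed.
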